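(* Let $A$ be a valuation domain in which every non-zero prime ideal is branched, and let $E$ be an $A$-module. The following are equivalent: (1) $aE=a^2E$ for each $a\in A$; (2) for each prime ideal $L$ of $A$, $LE/L'E$ is a divisible $A/L'$-module, where $L'$ denotes the union of all prime ideals properly contained in $L$.
   Context: In a valuation domain, a non-zero prime ideal $L$ is branched if it is not the union of the prime ideals properly contained in it. An $A/L'$-module $M$ is divisible if $sM=M$ for every $s\in A\setminus L'$. *)

From HB Require Import structures.
From mathcomp Require Import all_boot all_order all_algebra.
Set Implicit Arguments. Unset Strict Implicit. Unset Printing Implicit Defensive.
Import Order.TTheory GRing.Theory.
Local Open Scope ring_scope.

Definition valuation_domain (A : idomainType) : Prop :=
  forall a b : A, (exists c, b = a * c) \/ (exists c, a = b * c).

Definition is_ideal (A : comNzRingType) (I : A -> Prop) : Prop :=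
  [/\ I 0, (forall x y, I x -> I y -> I (x + y)) & (forall a x, I x -> I (a * x))].

Definition prime_ideal (A : comNzRingType) (P : A -> Prop) : Prop :=
  [/\ is_ideal P, ~ P 1 & (forall a b, P (a * b) -> P a \/ P b)].

Definition proper_sub (A : Type) (P L : A -> Prop) : Prop :=
  (forall x, P x -> L x) /\ exists x, L x /\ ~ P x.

Definition lower_prime (A : comNzRingType) (L : A -> Prop) : A -> Prop :=
  fun x => exists P, prime_ideal P /\ proper_sub P L /\ P x.

Definition branched (A : comNzRingType) (L : A -> Prop) : Prop :=
  exists x, L x /\ ~ lower_prime L x.

Definition nonzero_ideal (A : comNzRingType) (L : A -> Prop) : Prop :=
  exists x, L x /\ x <> 0.

Definition ideal_mul (A : comNzRingType) (E : lmodType A) (I : A -> Prop) : E -> Prop :=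
  fun m => exists n (l : 'I_n -> A) (x : 'I_n -> E),
    (forall i, I (l i)) /\ m = \sum_(i < n) l i *: x i.

Definition scal_img (A : comNzRingType) (E : lmodType A) (a : A) : E -> Prop :=
  fun m => exists y, m = a *: y.

(* The A/L'-module LE/L'E is divisible: s (LE/L'E) = LE/L'E for every
   s in A \ L', i.e. every m in LE is congruent modulo L'E to s *: m'
   for some m' in LE. *)
Definition quotient_divisible (A : comNzRingType) (E : lmodType A) (L : A -> Prop) : Prop :=
  forall s : A, ~ lower_prime L s ->
    forall m, @ideal_mul A E L m ->
      exists m', @ideal_mul A E L m' /\ @ideal_mul A E (lower_prime L) (m - s *: m').

From HB Require Import structures.
From mathcomp Require Import all_boot all_order all_algebra.
From mathcomp Require Import ring.
From Stdlib Require Import Classical.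
Import Order.TTheory GRing.Theory.
Local Open Scope ring_scope.

(* In a valuation domain the radical of a principal ideal aA is prime, and a
   prime L is minimal over aA exactly when a lies outside L'.  For
   (1) -> (2): if s lies in L \ L' then L is the radical of sA, so every l in
   L has l^k in sA, and aE = a^(k+1)E turns l x into s (c l z) with c l in L;
   if s lies outside L then s divides every element of L.  Hence LE = s LE.
   For (2) -> (1): take a non-unit a and L the radical of aA.  Every element
   of L' is divisible by a^2, so L'E lies in a^2 E, and applying divisibility
   of LE/L'E by a twice to a y gives a y in a^2 E. *)

Set Implicit Arguments.
Unset Strict Implicit.

Section Ideals.
Variable R : comNzRingType.

Lemma ideal_mull (I : R -> Prop) a x : is_ideal I -> I x -> I (a * x).
Proof. by case=> _ _; apply. Qed.

Lemma ideal_mulr (I : R -> Prop) a x : is_ideal I -> I x -> I (x * a).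
Proof. by rewrite mulrC; apply: ideal_mull. Qed.

Lemma prime_ideal_exp (L : R -> Prop) x k : prime_ideal L -> L (x ^+ k) -> L x.
Proof.
case=> _ L1 Lmul; elim: k => [|k IHk]; first by rewrite expr0.
by rewrite exprS => /Lmul [].
Qed.

Variable E : lmodType R.
Implicit Types (I : R -> Prop) (m : E).

Lemma ideal_mul0 I : ideal_mul I (0 : E).
Proof. by exists 0%N, (fun=> 0), (fun=> 0); split; [case | rewrite big_ord0]. Qed.

Lemma ideal_mul_scale I l (x : E) : I l -> ideal_mul I (l *: x).
Proof. by move=> Il; exists 1%N, (fun=> l), (fun=> x); rewrite big_ord1. Qed.

Lemma ideal_mul_scal_img I b m :
  (forall p, I p -> exists d, p = b * d) -> ideal_mul I m -> scal_img b m.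
Proof.
move=> Idvd [n [l [x [Il ->]]]].
have [d Hd] := fin_all_exists (fun i => Idvd _ (Il i)).
exists (\sum_(i < n) d i *: x i); rewrite scaler_sumr; apply: eq_bigr => i _.
by rewrite Hd scalerA.
Qed.

Lemma ideal_mul_scale_generators I s m :
  (forall l x, I l -> exists c (z : E), I c /\ l *: x = s *: (c *: z)) ->
  ideal_mul I m -> exists m', ideal_mul I m' /\ m = s *: m'.
Proof.
move=> Igen [n [l [x [Il ->]]]].
have [cz Hcz] := fin_all_exists (fun i => Igen (l i) (x i) (Il i)).
have [z Hz] := fin_all_exists Hcz.
exists (\sum_(i < n) cz i *: z i); split.
  by exists n, cz, z; split=> // i; case: (Hz i).
by rewrite scaler_sumr; apply: eq_bigr => i _; case: (Hz i).
Qed.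

End Ideals.

Section ValuationDomain.
Variable A : idomainType.
Hypothesis vd : valuation_domain A.

Definition principal_rad (a : A) : A -> Prop :=
  fun x => exists k c, x ^+ k = a * c.

Lemma principal_rad_self a : principal_rad a a.
Proof. by exists 1%N, 1; rewrite expr1 mulr1. Qed.

Lemma principal_rad_ideal a : is_ideal (principal_rad a).
Proof.
split.
- by exists 1%N, 0; rewrite expr1 mulr0.
- move=> x y [k [c xk]] [j [d yj]].
  case: (vd x y) => [[e ->]|[e ->]].
  + by exists k, (c * (1 + e) ^+ k); rewrite -{1}[x]mulr1 -mulrDr exprMn xk mulrA.
  + by exists j, (d * (e + 1) ^+ j); rewrite -{2}[y]mulr1 -mulrDr exprMn yj mulrA.
- move=> r x [k [c xk]]; exists k, (c * r ^+ k).
  by rewrite exprMn mulrC xk mulrA.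
Qed.

Lemma principal_radM a x y :
  principal_rad a (x * y) -> principal_rad a x \/ principal_rad a y.
Proof.
move=> [k [c xyk]].
have dvd_exp (u v e : A) : v = u * e -> v ^+ (k + k)%N = (u * v) ^+ k * e ^+ k.
  by move=> ->; rewrite exprD !exprMn; ring.
case: (vd x y) => [[e /dvd_exp yE]|[e /dvd_exp xE]].
- by right; exists (k + k)%N, (c * e ^+ k); rewrite yE xyk mulrA.
- by left; exists (k + k)%N, (c * e ^+ k); rewrite xE [y * x]mulrC xyk mulrA.
Qed.

Lemma principal_rad_prime a : a \isn't a GRing.unit -> prime_ideal (principal_rad a).
Proof.
move=> a_nunit; split; [exact: principal_rad_ideal | | exact: principal_radM].
move=> [k [c]]; rewrite expr1n => /esym a_inv.
by move/negP: a_nunit; apply; apply/unitrPr; exists c.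
Qed.

Lemma principal_rad_sub (L : A -> Prop) a x :
  prime_ideal L -> L a -> principal_rad a x -> L x.
Proof.
move=> PL La [k [c xk]]; apply: (prime_ideal_exp (k := k) PL).
by rewrite xk; apply: ideal_mulr La; case: PL.
Qed.

Lemma prime_ideal_nonunit (L : A -> Prop) s :
  prime_ideal L -> L s -> s \isn't a GRing.unit.
Proof.
move=> [IL L1 _] Ls; apply/negP => s_unit; apply: L1.
by rewrite -(mulVr s_unit); apply: ideal_mull.
Qed.

Lemma sub_principal_rad (L : A -> Prop) s x :
  prime_ideal L -> L s -> ~ lower_prime L s -> L x -> principal_rad s x.
Proof.
move=> PL Ls s_nlower Lx; apply: NNPP => x_nrad; apply: s_nlower.
exists (principal_rad s); split.
  exact/principal_rad_prime/(prime_ideal_nonunit PL).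
split; last exact: principal_rad_self.
by split; [move=> y; apply: principal_rad_sub | exists x].
Qed.

Lemma principal_rad_not_lower a : ~ lower_prime (principal_rad a) a.
Proof.
move=> [P [PP [[_ [x [rad_x Px]]] Pa]]].
by apply: Px; apply: principal_rad_sub PP Pa rad_x.
Qed.

Lemma prime_ideal_dvd_sqr (P : A -> Prop) a p :
  prime_ideal P -> ~ P a -> P p -> exists d, p = a ^+ 2 * d.
Proof.
move=> [IP _ Pmul] Pa Pp.
have dvd_a q : P q -> exists c, q = a * c /\ P c.
  move=> Pq; case: (vd a q) => [[c qE]|[c aE]].
  - by exists c; split=> //; move: Pq; rewrite qE => /Pmul [].
  - by case: Pa; rewrite aE; apply: ideal_mulr.
have [c [-> /dvd_a [d [-> _]]]] := dvd_a p Pp.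
by exists d; rewrite expr2 mulrA.
Qed.

Lemma lower_principal_rad_dvd_sqr a p :
  lower_prime (principal_rad a) p -> exists d, p = a ^+ 2 * d.
Proof.
move=> [P [PP [[_ [x [rad_x Px]]] Pp]]].
have Pa : ~ P a := fun Pa => Px (principal_rad_sub PP Pa rad_x).
exact: prime_ideal_dvd_sqr PP Pa Pp.
Qed.

Variable E : lmodType A.

Section IdempotentScaling.
Hypothesis scal_idem : forall (a : A) (m : E), scal_img a m <-> scal_img (a ^+ 2) m.

Lemma scal_img_exp a k (y : E) : exists z, a *: y = a ^+ k.+1 *: z.
Proof.
elim: k y => [|k IHk] y; first by exists y; rewrite expr1.
have [y' ->] := (scal_idem a (a *: y)).1 (ex_intro _ y erefl).
rewrite expr2 -scalerA; have [z ->] := IHk y'.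
by exists z; rewrite scalerA -exprS.
Qed.

Lemma quotient_divisible_of_idem (L : A -> Prop) :
  prime_ideal L -> quotient_divisible E L.
Proof.
move=> PL s s_nlower m Lm.
suff [m' [Lm' ->]] : exists m', ideal_mul L m' /\ m = s *: m'.
  by exists m'; rewrite subrr; split; last exact: ideal_mul0.
apply: ideal_mul_scale_generators Lm => l x Ll.
have IL : is_ideal L by case: PL.
have [Ls | Ls] := classic (L s).
- have [k [c lk]] := sub_principal_rad PL Ls s_nlower Ll.
  have [z ->] := scal_img_exp l k x.
  exists (c * l), z; split; first exact: ideal_mull.
  by rewrite scalerA exprSr lk mulrA.
- case: (vd s l) => [[e lE]|[e sE]].
  + exists e, x; split; last by rewrite scalerA lE.
    by case: PL => _ _ /(_ s e); rewrite -lE => /(_ Ll) [].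
  + by case: Ls; rewrite sE; apply: ideal_mulr.
Qed.

End IdempotentScaling.

Lemma scal_img_sqr_of_divisible a (y : E) :
  (forall L, prime_ideal L -> quotient_divisible E L) -> scal_img (a ^+ 2) (a *: y).
Proof.
move=> divisible.
have [a_unit | a_nunit] := boolP (a \is a GRing.unit).
  by exists (a^-1 ^+ 2 *: (a *: y)); rewrite scalerA -exprMn divrr // expr1n scale1r.
have div_a := divisible _ (principal_rad_prime a_nunit) a (@principal_rad_not_lower a).
have lower_sqr := ideal_mul_scal_img (@lower_principal_rad_dvd_sqr a).
have [m' [rad_m' /lower_sqr [w yE]]] :=
  div_a _ (ideal_mul_scale y (principal_rad_self a)).
have [m'' [_ /lower_sqr [w' m'E]]] := div_a _ rad_m'.
exists (w + a *: w' + m'').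
move/eqP: yE; rewrite subr_eq => /eqP ->.
move/eqP: m'E; rewrite subr_eq => /eqP ->.
by rewrite !scalerDr !scalerA -expr2 (mulrC a (a ^+ 2)) addrA.
Qed.

End ValuationDomain.

Theorem proposition2p6 (A : idomainType) (E : lmodType A) :
  valuation_domain A ->
  (forall L : A -> Prop, prime_ideal L -> nonzero_ideal L -> branched L) ->
  ((forall (a : A) (m : E), @scal_img A E a m <-> @scal_img A E (a ^+ 2) m) <->
   (forall L : A -> Prop, prime_ideal L -> @quotient_divisible A E L)).
Proof.
move=> vd _; split=> [scal_idem L PL | divisible a m].
  exact: quotient_divisible_of_idem.
split=> [[y ->] | [z ->]]; first exact: scal_img_sqr_of_divisible.
by exists (a *: z); rewrite scalerA expr2.
Qed.
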